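(* Let $\alpha\in\Phi_+$ and, for each $s\in\mathbb{F}_q^\times$, let $\lambda_{\alpha,s}$ be any linear character of $V_\alpha$ with $\lambda_{\alpha,s}|_{X_\alpha}=\varphi_{\alpha,s}$ and $X_\gamma\subseteq\ker(\lambda_{\alpha,s})$ for all $\gamma\in\Phi_+$ with $\operatorname{ht}(\gamma)>\operatorname{ht}(\alpha)$ (such characters exist). Then the induced characters $\mu_{\alpha,s}:=\lambda_{\alpha,s}^U$, $s\in\mathbb{F}_q^\times$, are $q-1$ pairwise distinct irreducible characters of $U$, and $\mu_{\alpha,s}|_{X_\alpha}=\mu_{\alpha,s}(1)\cdot\varphi_{\alpha,s}$.
   Context: $q$ is a power of a prime $p$. $\Phi$ is a root system of type $D_4$ with simple roots $\alpha_1,\alpha_2,\alpha_3,\alpha_4$ ($\alpha_3$ central node), positive roots $\Phi_+=\{\alpha_1,\dots,\alpha_{12}\}$ with $\alpha_5=\alpha_1+\alpha_3$, $\alpha_6=\alpha_2+\alpha_3$, $\alpha_7=\alpha_3+\alpha_4$, $\alpha_8=\alpha_1+\alpha_2+\alpha_3$, $\alpha_9=\alpha_1+\alpha_3+\alpha_4$, $\alpha_{10}=\alpha_2+\alpha_3+\alpha_4$, $\alpha_{11}=\alpha_1+\alpha_2+\alpha_3+\alpha_4$, $\alpha_{12}=\alpha_1+\alpha_2+2\alpha_3+\alpha_4$; $\operatorname{ht}$ is the height. $U=U(q)$ is the Sylow $p$-subgroup of the Chevalley group $D_4(q)$ generated by $x_i(t)$ ($i=1,\dots,12$, $t\in\mathbb{F}_q$),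 with $x_i(t)x_i(u)=x_i(t+u)$, each element uniquely $x_1(d_1)\cdots x_{12}(d_{12})$, and commutators ($[a,b]=a^{-1}b^{-1}ab$): $[x_1(t),x_3(u)]=x_5(tu)$, $[x_1(t),x_6(u)]=x_8(-tu)$, $[x_1(t),x_7(u)]=x_9(tu)$, $[x_1(t),x_{10}(u)]=x_{11}(-tu)$, $[x_2(t),x_3(u)]=x_6(tu)$, $[x_2(t),x_5(u)]=x_8(-tu)$, $[x_2(t),x_7(u)]=x_{10}(tu)$, $[x_2(t),x_9(u)]=x_{11}(-tu)$, $[x_3(t),x_4(u)]=x_7(tu)$, $[x_3(t),x_{11}(u)]=x_{12}(-tu)$, $[x_4(t),x_5(u)]=x_9(-tu)$, $[x_4(t),x_6(u)]=x_{10}(-tu)$, $[x_4(t),x_8(u)]=x_{11}(-tu)$, $[x_5(t),x_{10}(u)]=x_{12}(-tu)$, $[x_6(t),x_9(u)]=x_{12}(-tu)$, $[x_7(t),x_8(u)]=x_{12}(tu)$, others trivial. $X_{\alpha_i}=\{x_i(t)\}$. Fix a nontrivial linear character $\phi$ of $(\mathbb{F}_q,+)$; $\varphi_{\alpha_i,s}(x_i(d))=\phi(sd)$. Hooks: $h_\alpha=\{\gamma\in\Phi_+:\exists\gamma'\in\Phi_+\cup\{0\},\ \gamma+\gamma'=\alpha\}$; $\operatorname{arm}(h_\alpha)=(h_\alpha\cap h_{\alpha_{12}})\setminus\{\alpha\}$ if $\alpha\neq\alpha_{12}$, $\operatorname{arm}(h_{\alpha_{12}})=\{\alpha_8,\alpha_9,\alpha_{10},\alpha_{11}\}$;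 $\operatorname{leg}(h_\alpha)=h_\alpha\setminus(\operatorname{arm}(h_\alpha)\cup\{\alpha\})$. $V_\alpha=\prod_{\gamma\in\Phi_+\setminus\operatorname{leg}(h_\alpha)}X_\gamma$, a subgroup of $U$. $\chi^U$ denotes induction to $U$. *)

From HB Require Import structures.
From mathcomp Require Import all_boot all_order all_algebra all_fingroup all_solvable all_field all_character.
Set Implicit Arguments. Unset Strict Implicit. Unset Printing Implicit Defensive.
Import GRing.Theory Num.Theory.

(* Positive roots of D4, indexed 1..12, as coefficient vectors w.r.t.
   (alpha_1, alpha_2, alpha_3, alpha_4); alpha_3 is the central node. *)
Definition rootc (i : nat) : nat * nat * nat * nat :=
  match i with
  | 1 => (1,0,0,0) | 2 => (0,1,0,0) | 3 => (0,0,1,0) | 4 => (0,0,0,1)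
  | 5 => (1,0,1,0) | 6 => (0,1,1,0) | 7 => (0,0,1,1) | 8 => (1,1,1,0)
  | 9 => (1,0,1,1) | 10 => (0,1,1,1) | 11 => (1,1,1,1) | 12 => (1,1,2,1)
  | _ => (0,0,0,0)
  end.

Definition posroots : seq nat := iota 1 12.

Definition radd (a b : nat * nat * nat * nat) : nat * nat * nat * nat :=
  let: (a1, a2, a3, a4) := a in let: (b1, b2, b3, b4) := b in
  (a1 + b1, a2 + b2, a3 + b3, a4 + b4)%N.

Definition ht (i : nat) : nat :=
  let: (a1, a2, a3, a4) := rootc i in (a1 + a2 + a3 + a4)%N.

Definition hook (a : nat) : seq nat :=
  [seq g <- posroots | (g == a) ||
     has (fun g' => radd (rootc g) (rootc g') == rootc a) posroots].

Definition arm (a : nat) : seq nat :=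
  if a == 12 then [:: 8; 9; 10; 11]
  else [seq g <- hook a | (g \in hook 12) && (g != a)].

Definition leg (a : nat) : seq nat :=
  [seq g <- hook a | (g \notin arm a) && (g != a)].

(* Commutator table: for 1 <= i < j <= 12, [x_i(t), x_j(u)] = x_k(+-tu)
   if ctab i j = Some (k, neg) (neg = true means the sign is -),
   and = 1 if ctab i j = None. *)
Definition ctab (i j : nat) : option (nat * bool) :=
  match i, j with
  | 1, 3 => Some (5, false)  | 1, 6 => Some (8, true)
  | 1, 7 => Some (9, false)  | 1, 10 => Some (11, true)
  | 2, 3 => Some (6, false)  | 2, 5 => Some (8, true)
  | 2, 7 => Some (10, false) | 2, 9 => Some (11, true)
  | 3, 4 => Some (7, false)  | 3, 11 => Some (12, true)
  | 4, 5 => Some (9, true)   | 4, 6 => Some (10, true)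
  | 4, 8 => Some (11, true)  | 5, 10 => Some (12, true)
  | 6, 9 => Some (12, true)  | 7, 8 => Some (12, false)
  | _, _ => None
  end.

Section D4.
Variables (F : finFieldType) (gT : finGroupType).

Definition prodx (x : nat -> F -> gT) (d : {ffun 'I_12 -> F}) : gT :=
  (\prod_(i < 12) x i.+1 (d i))%g.

Definition is_D4_unipotent (U : {group gT}) (x : nat -> F -> gT) : Prop :=
  [/\ forall i t, (1 <= i <= 12)%N -> x i t \in U,
      forall i t u, (1 <= i <= 12)%N -> x i (t + u)%R = (x i t * x i u)%g,
      U :=: [set prodx x d | d : {ffun 'I_12 -> F}],
      injective (prodx x) &
      forall i j t u, (1 <= i)%N -> (i < j)%N -> (j <= 12)%N ->
        ([~ x i t, x j u])%g =
          match ctab i j with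
          | Some (k, neg) => x k (if neg then - (t * u) else t * u)%R
          | None => 1%g
          end].

Definition Xset (x : nat -> F -> gT) (g : nat) : {set gT} :=
  [set x g t | t : F].

(* V_a = prod_{g in Phi+ \ leg(h_a)} X_g (product in increasing order of the
   index); the paper asserts it is a subgroup, we take the group it
   generates (equal to it). *)
Definition Vset (x : nat -> F -> gT) (a : nat) : {set gT} :=
  (\prod_(g <- [seq g <- posroots | g \notin leg a]) Xset x g)%g.

Definition Vgroup (x : nat -> F -> gT) (a : nat) : {group gT} :=
  <<Vset x a>>%G.

End D4.

From HB Require Import structures.
From mathcomp Require Import all_boot all_order all_algebra all_fingroup all_solvable all_field all_character.
From mathcomp Require Import ring.
Import GRing.Theory Num.Theory.
Set Implicit Arguments. Unset Strict Implicit. Unset Printing Implicit Defensive.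
Local Open Scope ring_scope.

(* Let lam be a linear character of V <= U.  By Frobenius reciprocity
   '[Ind lam] = |V|^-2 * sum_(y in U) sum_(v in V) lam (v^y) * (lam v)^*, where the
   inner sum is |V| for y in V and vanishes when y moves lam, i.e. when some w in V
   with w^y in V has lam (w^y) != lam w.  For V = V_a every y outside V_a moves lam:
   if c is the first nonzero coordinate of the normal form of y on a root g of
   leg(a), conjugating x_h(t), for the arm root h with g + h = a, by the block of
   factors starting with x_g(c) gives x_h(t) x_a(+-c t) modulo roots higher than a,
   so lam changes by phi(+-s c t) != 1 for a suitable t.  The same commutator
   calculus puts [x_a(d), U] inside the group of higher roots, hence inside ker lam,
   which forces Ind lam (x_a(d)) = Ind lam 1 * phi(s d); as phi is nontrivial these
   values separate the parameters s. *)

Section InducedLinearChar.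
Variables (gT : finGroupType) (G H : {group gT}).
Hypothesis sHG : H \subset G.
Variable lam : 'CF(H).
Hypothesis lam_lin : lam \is a linear_char.

Definition moved_by (y : gT) : Prop :=
  exists2 w, w \in H & ((w ^ y)%g \in H) && (lam (w ^ y)%g != lam w).

Lemma moved_by_dcoset v1 y v2 :
  v1 \in H -> v2 \in H -> moved_by y -> moved_by (v1 * y * v2)%g.
Proof.
move=> Hv1 Hv2 [w Hw /andP[Hwy lam_wy]]; exists (w ^ v1^-1)%g; first by rewrite groupJ ?groupV.
have -> : ((w ^ v1^-1) ^ (v1 * y * v2) = (w ^ y) ^ v2)%g.
  by rewrite -!conjgM !mulgA mulVg mul1g.
by rewrite groupJ //= cfunJ // (cfunJ _ w (groupVr Hv1)).
Qed.

Local Notation conj_sum y := (\sum_(v in H) lam (v ^ y)%g * (lam v)^*).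

Lemma lin_char_mul_conj v : v \in H -> lam v * (lam v)^* = 1.
Proof. by move=> Hv; rewrite -lin_charV_conj // -lin_charM ?groupV // mulgV lin_char1. Qed.

Lemma conj_sum_in y : y \in H -> conj_sum y = #|H|%:R.
Proof.
by move=> Hy; rewrite -sumr_const; apply: eq_bigr => v Hv; rewrite cfunJ // lin_char_mul_conj.
Qed.

(* Reindexing by [v |-> w * v] multiplies the sum by [c != 1]. *)
Lemma conj_sum_moved y : moved_by y -> conj_sum y = 0.
Proof.
case=> w Hw /andP[Hwy lam_wy]; set c := lam (w ^ y)%g * (lam w)^*.
have c_neq1 : c != 1.
  apply: contra lam_wy => /eqP c1; apply/eqP.
  by rewrite -[lam (w ^ y)%g]mulr1 -(lin_char_mul_conj Hw) mulrCA -/c c1 mulr1.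
have shift : conj_sum y = c * conj_sum y.
  rewrite mulr_sumr (reindex_inj (mulgI w)) /=.
  apply: eq_big => [v | v Hwv]; first by rewrite groupMl.
  have Hv : v \in H by rewrite -(groupMl v Hw).
  rewrite conjMg; have [Hvy | Hvy] := boolP ((v ^ y)%g \in H); last first.
    have Hwvy : (w ^ y * v ^ y)%g \notin H by rewrite groupMl.
    by rewrite (cfun0 _ Hvy) (cfun0 _ Hwvy) !mul0r mulr0.
  by rewrite (lin_charM lam_lin Hwy Hvy) (lin_charM lam_lin Hw Hv) rmorphM /= /c; ring.
apply/eqP; move: shift => /eqP; rewrite -subr_eq0 -{1}[conj_sum y]mul1r -mulrBl.
by rewrite mulf_eq0 subr_eq0 eq_sym (negPf c_neq1).
Qed.

Lemma cfInd_lin_char_irr :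
  (forall y, y \in G -> y \in H \/ moved_by y) -> 'Ind[G] lam \in irr G.
Proof.
move=> cover; rewrite irrEchar cfInd_char ?lin_charW //=.
rewrite -Frobenius_reciprocity cfdotC cfdotE.
rewrite (eq_bigr (fun v => #|H|%:R^-1 * \sum_(y in G) lam (v ^ y)%g * (lam v)^*)); last first.
  by move=> v Hv; rewrite cfResE ?cfIndE // -mulrA mulr_suml.
rewrite -mulr_sumr exchange_big (big_setID H) /= (setIidPr sHG) [X in _ + X]big1 ?addr0; last first.
  by move=> y /setDP[Gy notHy]; case: (cover y Gy) => [Hy | /conj_sum_moved //]; rewrite Hy in notHy.
rewrite (eq_bigr (fun _ => #|H|%:R)) => [|y]; last exact: conj_sum_in.
have H_neq0 : (#|H|%:R : algC) != 0 by rewrite pnatr_eq0 -lt0n cardG_gt0.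
by rewrite sumr_const -mulr_natr; apply/eqP; rewrite -[1 in RHS]conjC1; congr (_^*); field.
Qed.

Lemma cfInd_lin_char_comm_ker z :
  z \in H -> (forall y, y \in G -> [~ z, y]%g \in cfker lam) ->
  'Ind[G] lam z = 'Ind[G] lam 1%g * lam z.
Proof.
move=> Hz comm_ker; rewrite cfIndE // cfInd1 // lin_char1 // mulr1.
rewrite (eq_bigr (fun _ => lam z)) => [|y Gy]; last by rewrite conjg_mulR cfkerMr ?comm_ker.
have H_neq0 : (#|H|%:R : algC) != 0 by rewrite pnatr_eq0 -lt0n cardG_gt0.
by rewrite sumr_const -(Lagrange sHG) -[lam z *+ _]mulr_natr natrM [lam z * _]mulrCA mulKf // mulrC.
Qed.

End InducedLinearChar.

Section AdditiveChar.
Variables (F : fieldType) (phi : F -> algC).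
Hypotheses (phiD : forall a b, phi (a + b) = phi a * phi b) (phi0 : phi 0 = 1).

Lemma add_char_neq0 a : phi a != 0.
Proof.
apply/eqP=> phi_a0; move: phi0; rewrite -(subrr a) phiD phi_a0 mul0r => /eqP.
by rewrite eq_sym oner_eq0.
Qed.

Lemma add_char_scale_inj a0 s t :
  phi a0 != 1 -> (forall d, phi (s * d) = phi (t * d)) -> s = t.
Proof.
move=> phi_a0 eq_st; apply/eqP; rewrite -subr_eq0; apply: contraNT phi_a0 => st_neq0.
have := eq_st (a0 / (s - t)).
rewrite (_ : s * _ = a0 + t * (a0 / (s - t))); last by field.
by rewrite phiD -{2}[phi (t * _)]mul1r => /(mulIf (add_char_neq0 _)) ->.
Qed.

End AdditiveChar.

Lemma mem_posroots a : (a \in posroots) = (1 <= a <= 12)%N.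
Proof. by rewrite mem_iota. Qed.

Lemma ht_gt0 k : (0 < ht k)%N = (1 <= k <= 12)%N.
Proof. by do 13!(case: k => [|k] //). Qed.

Lemma ctab_root i j k b :
  ctab i j = Some (k, b) -> (1 <= k <= 12)%N /\ ht k = (ht i + ht j)%N.
Proof.
case: i => [|[|[|[|[|[|[|[|[|[|[|[|[|i]]]]]]]]]]]]] //=;
  case: j => [|[|[|[|[|[|[|[|[|[|[|[|[|j]]]]]]]]]]]]] //= [<- _] //.
Qed.

Lemma leg_root1 : leg 1 = [::]. Proof. by vm_compute. Qed.
Lemma leg_root2 : leg 2 = [::]. Proof. by vm_compute. Qed.
Lemma leg_root3 : leg 3 = [::]. Proof. by vm_compute. Qed.
Lemma leg_root4 : leg 4 = [::]. Proof. by vm_compute. Qed.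
Lemma leg_root5 : leg 5 = [:: 1]. Proof. by vm_compute. Qed.
Lemma leg_root6 : leg 6 = [:: 2]. Proof. by vm_compute. Qed.
Lemma leg_root7 : leg 7 = [:: 4]. Proof. by vm_compute. Qed.
Lemma leg_root8 : leg 8 = [:: 1; 2]. Proof. by vm_compute. Qed.
Lemma leg_root9 : leg 9 = [:: 1; 4]. Proof. by vm_compute. Qed.
Lemma leg_root10 : leg 10 = [:: 2; 4]. Proof. by vm_compute. Qed.
Lemma leg_root11 : leg 11 = [:: 1; 2; 4]. Proof. by vm_compute. Qed.
Lemma leg_root12 : leg 12 = [:: 3; 5; 6; 7]. Proof. by vm_compute. Qed.
Definition leg_rootE := (leg_root1, leg_root2, leg_root3, leg_root4, leg_root5, leg_root6,
  leg_root7, leg_root8, leg_root9, leg_root10, leg_root11, leg_root12).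

Section RootRelations.
Local Open Scope group_scope.
Variables (F : finFieldType) (gT : finGroupType) (U : {group gT}) (x : nat -> F -> gT).
Hypothesis HU : is_D4_unipotent U x.

Definition ctab_comm i j (t u : F) : gT :=
  if ctab i j is Some (k, neg) then x k (if neg then - (t * u) else t * u)%R else 1.

Definition root_comm i j (t u : F) : gT :=
  if (i < j)%N then ctab_comm i j t u
  else if (j < i)%N then ctab_comm j i (- u)%R t else 1.

Lemma root_elem_mem i t : (1 <= i <= 12)%N -> x i t \in U.
Proof. by case: HU => root_U _ _ _ _; apply: root_U. Qed.

Lemma root_elemD i t u : (1 <= i <= 12)%N -> x i (t + u)%R = x i t * x i u.
Proof. by case: HU => _ root_add _ _ _; apply: root_add. Qed.

Lemma root_elem0 i : (1 <= i <= 12)%N -> x i 0 = 1.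
Proof. by move=> Hi; apply: (@mulgI _ (x i 0)); rewrite -root_elemD // addr0 mulg1. Qed.

Lemma root_elemV i t : (1 <= i <= 12)%N -> (x i t)^-1 = x i (- t)%R.
Proof. by move=> Hi; apply: (@mulgI _ (x i t)); rewrite mulgV -root_elemD // subrr root_elem0. Qed.

Lemma ctab_commV i j t u : (ctab_comm i j t u)^-1 = ctab_comm i j (- t)%R u.
Proof.
rewrite /ctab_comm; case E: (ctab i j) => [[k neg]|]; last exact: invg1.
by have [Hk _] := ctab_root E; rewrite root_elemV //; case: neg {E}; rewrite mulNr ?opprK.
Qed.

Lemma comm_root i j t u :
  (1 <= i <= 12)%N -> (1 <= j <= 12)%N -> [~ x i t, x j u] = root_comm i j t u.
Proof.
have ctab_commE k l v w : (1 <= k)%N -> (k < l)%N -> (l <= 12)%N ->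
    [~ x k v, x l w] = ctab_comm k l v w.
  by case: HU => _ _ _ _; apply.
move=> /andP[i_gt0 i_le12] /andP[j_gt0 j_le12]; rewrite /root_comm.
case: ltngtP => [lt_ij | lt_ji | <-]; first exact: ctab_commE.
  by rewrite -invg_comm ctab_commE // ctab_commV.
by apply/eqP/commgP; rewrite /commute -!root_elemD ?i_gt0 // addrC.
Qed.

Lemma conj_root i j t u : (1 <= i <= 12)%N -> (1 <= j <= 12)%N ->
  x i t ^ x j u = x i t * root_comm i j t u.
Proof. by move=> Hi Hj; rewrite conjg_mulR comm_root. Qed.

Lemma root_comm_ht i j t u :
  root_comm i j t u = 1 \/ exists k e, root_comm i j t u = x k e /\ ht k = (ht i + ht j)%N.
Proof.
rewrite /root_comm /ctab_comm; case: ltngtP => _; last by left.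
  case E: (ctab i j) => [[k neg]|]; last by left.
  by right; exists k, (if neg then - (t * u) else t * u)%R; have [_ ->] := ctab_root E.
case E: (ctab j i) => [[k neg]|]; last by left.
by right; exists k, (if neg then - (- u * t) else - u * t)%R; have [_ ->] := ctab_root E; rewrite addnC.
Qed.

Lemma Xset1 g : (1 <= g <= 12)%N -> 1 \in Xset x g.
Proof. by move=> Hg; apply/imsetP; exists 0%R; rewrite ?root_elem0. Qed.

Lemma prod_Xset1 (s : seq nat) :
  all (fun g => 1 <= g <= 12)%N s -> 1 \in \prod_(g <- s) Xset x g.
Proof.
elim: s => [|g s IHs] /= => [_ | /andP[Hg Hs]]; first by rewrite big_nil set11.
by rewrite big_cons -[1]mulg1 mem_mulg ?Xset1 ?IHs.
Qed.

Lemma root_mem_prod (s : seq nat) g t :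
  all (fun g => 1 <= g <= 12)%N s -> g \in s -> x g t \in \prod_(i <- s) Xset x i.
Proof.
elim: s => // i s IHs /= /andP[Hi Hs]; rewrite inE big_cons => /predU1P[-> | g_s].
  by rewrite -[x i t]mulg1 mem_mulg ?prod_Xset1 //; apply/imsetP; exists t.
by rewrite -[x g t]mul1g mem_mulg ?Xset1 ?IHs.
Qed.

Lemma Vset_roots a : all (fun g => 1 <= g <= 12)%N [seq g <- posroots | g \notin leg a].
Proof. by apply/allP => g; rewrite mem_filter mem_posroots => /andP[]. Qed.

Lemma root_memV a g t : (1 <= g <= 12)%N -> g \notin leg a -> x g t \in Vgroup x a.
Proof.
by move=> Hg g_leg; apply/mem_gen/root_mem_prod; rewrite ?Vset_roots // mem_filter g_leg mem_posroots.
Qed.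

Lemma Vgroup_sub a : Vgroup x a \subset U.
Proof.
rewrite gen_subG /Vset big_seq; apply: (big_ind (fun A : {set gT} => A \subset U)).
- exact: sub1G.
- exact: mul_subG.
move=> g; rewrite mem_filter mem_posroots => /andP[_ Hg].
by apply/subsetP => _ /imsetP[t _ ->]; apply: root_elem_mem.
Qed.

Lemma U_prodx y : y \in U -> exists d, y = prodx x d.
Proof. by case: HU => _ _ -> _ _ /imsetP[d _ ->]; exists d. Qed.

End RootRelations.

Section HigherRoots.
Local Open Scope group_scope.
Variables (F : finFieldType) (gT : finGroupType) (U : {group gT}) (x : nat -> F -> gT).
Hypothesis HU : is_D4_unipotent U x.
Variable a : nat.
Hypothesis Ha : (1 <= a <= 12)%N.

Definition Xhigher : {group gT} := <<\bigcup_(k < 13 | (ht a < ht k)%N) Xset x k>>%G.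

Lemma root_higher k e : (ht a < ht k)%N -> x k e \in Xhigher.
Proof.
move=> lt_ak; have /andP[_ k_le12] : (1 <= k <= 12)%N by rewrite -ht_gt0 (leq_trans _ lt_ak).
apply/mem_gen/bigcupP; exists (Ordinal (k_le12 : k < 13)%N) => //.
by apply/imsetP; exists e.
Qed.

Lemma comm_root_higher i j t u : (1 <= i <= 12)%N -> (1 <= j <= 12)%N ->
  (ht a <= ht j)%N -> [~ x j t, x i u] \in Xhigher.
Proof.
move=> Hi Hj le_aj; rewrite (comm_root HU) //.
have [-> | [k [e [-> ht_k]]]] := root_comm_ht x j i t u; first exact: group1.
by apply: root_higher; rewrite ht_k -addn1 leq_add // ht_gt0.
Qed.

Lemma root_norm_higher i u : (1 <= i <= 12)%N -> x i u \in 'N(Xhigher).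
Proof.
move=> Hi; apply/normP/eqP; rewrite eqEcard cardJg leqnn andbT -genJ gen_subG.
apply/subsetP => _ /imsetP[_ /bigcupP[k lt_ak /imsetP[e _ ->]] ->].
have Hk : (1 <= k <= 12)%N by rewrite -ht_gt0 (leq_trans _ lt_ak).
by rewrite conjg_mulR groupM ?root_higher ?comm_root_higher // ltnW.
Qed.

Lemma comm_higher d y : y \in U -> [~ x a d, y] \in Xhigher.
Proof.
move=> /(U_prodx HU)[c ->]; rewrite /prodx.
pose P y := ([~ x a d, y] \in Xhigher) && (y \in 'N(Xhigher)).
suff /andP[] : P (\prod_(i < 12) x i.+1 (c i)) by [].
apply: (big_ind P) => [|y1 y2 /andP[comm1 norm1] /andP[comm2 norm2] | i _].
- by rewrite /P commg1 !group1.
- by rewrite /P commgMJ; apply/andP; split; rewrite groupM ?memJ_norm.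
have Hi : (1 <= i.+1 <= 12)%N by case: i.
by rewrite /P root_norm_higher ?comm_root_higher.
Qed.

Lemma Xhigher_ker (lam : 'CF(Vgroup x a)) :
  (forall g, g \in posroots -> (ht a < ht g)%N -> Xset x g \subset cfker lam) ->
  Xhigher \subset cfker lam.
Proof.
move=> lam_ker; rewrite gen_subG; apply/bigcupsP => k lt_ak; apply: lam_ker => //.
by rewrite mem_posroots -ht_gt0 (leq_trans _ lt_ak).
Qed.

End HigherRoots.

Section RootCharacter.
Local Open Scope group_scope.
Variables (F : finFieldType) (gT : finGroupType) (U : {group gT}) (x : nat -> F -> gT).
Hypothesis HU : is_D4_unipotent U x.
Variables (phi : F -> algC) (a0 : F).
Hypothesis phi_a0 : (phi a0 != 1)%R.

Definition root_lift a (lam : 'CF(Vgroup x a)) (s : F) : Prop :=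
  [/\ lam \is a linear_char, forall d, lam (x a d) = phi (s * d)%R &
      forall g, g \in posroots -> (ht a < ht g)%N -> Xset x g \subset cfker lam].

Definition nf (c1 c2 c3 c4 c5 c6 c7 c8 c9 c10 c11 c12 : F) : gT :=
  x 1 c1 * (x 2 c2 * (x 3 c3 * (x 4 c4 * (x 5 c5 * (x 6 c6 * (x 7 c7 * (x 8 c8 *
    (x 9 c9 * (x 10 c10 * (x 11 c11 * x 12 c12)))))))))).

Definition nf_separated a (lam : 'CF(Vgroup x a)) : Prop :=
  forall c1 c2 c3 c4 c5 c6 c7 c8 c9 c10 c11 c12,
  nf c1 c2 c3 c4 c5 c6 c7 c8 c9 c10 c11 c12 \in Vgroup x a \/
  moved_by lam (nf c1 c2 c3 c4 c5 c6 c7 c8 c9 c10 c11 c12).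

Variables (a : nat) (lam : 'CF(Vgroup x a)) (s : F).
Hypotheses (Ha : (1 <= a <= 12)%N) (s_neq0 : (s != 0)%R).
Hypotheses (lam_lin : lam \is a linear_char) (lam_x : forall d, lam (x a d) = phi (s * d)%R).
Hypothesis lam_ker : forall g, g \in posroots -> (ht a < ht g)%N -> Xset x g \subset cfker lam.

Lemma root_memV_self d : x a d \in Vgroup x a.
Proof. by apply: (root_memV HU); rewrite // /leg mem_filter eqxx andbF. Qed.

Lemma cfInd_root_value d : 'Ind[U] lam (x a d) = ('Ind[U] lam 1%g * phi (s * d))%R.
Proof.
rewrite -lam_x; apply: cfInd_lin_char_comm_ker => [|||y Uy].
- exact: (Vgroup_sub HU).
- exact: lam_lin.
- exact: root_memV_self.
by apply: (subsetP (Xhigher_ker lam_ker)); apply: (comm_higher HU Ha).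
Qed.

Lemma moved_by_root_conj v1 z v2 h k (n : F -> gT) :
  v1 \in Vgroup x a -> v2 \in Vgroup x a -> (k != 0)%R ->
  (forall t, x h t \in Vgroup x a) -> (forall t, n t \in Xhigher x a) ->
  (forall t, x h t ^ z = x h t * (x a (k * t)%R * n t)) -> moved_by lam (v1 * z * v2).
Proof.
move=> Vv1 Vv2 k_neq0 Vh n_higher conj_h; apply: moved_by_dcoset => //.
pose t := (a0 / (s * k))%R; exists (x h t) => //; rewrite conj_h.
have n_ker : n t \in cfker lam := subsetP (Xhigher_ker lam_ker) _ (n_higher t).
have Vn : n t \in Vgroup x a := subsetP (cfker_sub lam) _ n_ker.
have skt : (s * (k * t) = a0)%R by rewrite /t mulrA mulrC divfK // mulf_neq0.
have Vw : x h t * x a (k * t)%R \in Vgroup x a by rewrite groupM ?root_memV_self.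
rewrite mulgA groupM // cfkerMr // lin_charM ?root_memV_self // lam_x skt.
by rewrite -[X in _ != X]mulr1 (inj_eq (mulfI (lin_char_neq0 lam_lin (Vh t)))).
Qed.

Lemma moved_by_root_conj1 v1 z v2 h k :
  v1 \in Vgroup x a -> v2 \in Vgroup x a -> (k != 0)%R -> (forall t, x h t \in Vgroup x a) ->
  (forall t, x h t ^ z = x h t * x a (k * t)%R) -> moved_by lam (v1 * z * v2).
Proof.
move=> Vv1 Vv2 k_neq0 Vh conj_h.
by apply: (@moved_by_root_conj v1 z v2 h k (fun=> 1)) => // t; rewrite ?group1 // mulg1.
Qed.

End RootCharacter.

(* A locked copy of conjugation: rewriting with conjMg would otherwise unfold
   nested conjugates [w ^ y ^ z] to match the product in [(_ * _) ^ _]. *)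
Definition conjl (gT : finGroupType) (w z : gT) : gT := locked (w ^ z)%g.

Lemma conjlE (gT : finGroupType) (w z : gT) : conjl w z = (w ^ z)%g.
Proof. by rewrite /conjl -lock. Qed.

Lemma conjlM (gT : finGroupType) (w y z : gT) : conjl w (y * z)%g = conjl (conjl w y) z.
Proof. by rewrite !conjlE conjgM. Qed.

Lemma conjlMg (gT : finGroupType) (v w z : gT) : conjl (v * w)%g z = (conjl v z * conjl w z)%g.
Proof. by rewrite !conjlE conjMg. Qed.

Lemma conjl_root (F : finFieldType) (gT : finGroupType) (U : {group gT}) (x : nat -> F -> gT) :
  is_D4_unipotent U x -> forall i j t u, (1 <= i <= 12)%N -> (1 <= j <= 12)%N ->
  conjl (x i t) (x j u) = (x i t * root_comm x i j t u)%g.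
Proof. by move=> HU i j t u Hi Hj; rewrite conjlE (conj_root HU). Qed.

Ltac memV HU := repeat first
  [ apply: group1 | apply: groupM | apply: (root_memV HU); rewrite ?leg_rootE // ].

Ltac conj_roots HU := rewrite -conjlE ?conjlM;
  repeat progress rewrite ?conjlMg ?(conjl_root HU) //= /root_comm /ctab_comm /= ?mulg1 ?mul1g.

Ltac regroup HU v1 z v2 :=
  rewrite (_ : nf _ _ _ _ _ _ _ _ _ _ _ _ _ = v1 * z * v2)%g;
    last by rewrite /nf ?(root_elem0 HU) // ?mul1g !mulgA.

Ltac separate_goals HU :=
  lazymatch type of HU with is_D4_unipotent _ ?x =>
  try by [rewrite ?oppr_eq0 | memV HU | move=> t; memV HU | move=> t; exact: root_higher];
  by move=> t; conj_roots HU; congr (_ * _)%g; first [congr (x _ _ * x _ _)%g | congr (x _ _)]; ring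
  end.

Ltac separate HU moved h k := right; apply: (moved _ _ _ h k); separate_goals HU.

Ltac nf_memV HU := left; rewrite /nf ?(root_elem0 HU) // ?mul1g; memV HU.

Section RootSeparation.
Local Close Scope ring_scope.
Local Open Scope group_scope.
Variables (F : finFieldType) (gT : finGroupType) (U : {group gT}) (x : nat -> F -> gT).
Hypothesis HU : is_D4_unipotent U x.
Variables (phi : F -> algC) (a0 : F).
Hypothesis phi_a0 : (phi a0 != 1)%R.

Lemma nf_separated_leg_nil a (lam : 'CF(Vgroup x a)) : leg a = [::] -> nf_separated lam.
Proof.
move=> leg_nil c1 c2 c3 c4 c5 c6 c7 c8 c9 c10 c11 c12; left.
by rewrite /nf; memV HU; rewrite leg_nil.
Qed.

Lemma nf_separated5 (lam : 'CF(Vgroup x 5)) s :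
  (s != 0)%R -> root_lift phi lam s -> nf_separated lam.
Proof.
move=> s_neq0 [lam_lin lam_x lam_ker] c1 c2 c3 c4 c5 c6 c7 c8 c9 c10 c11 c12.
have moved := moved_by_root_conj1 HU phi_a0 (isT : (1 <= 5 <= 12)%N) s_neq0 lam_lin lam_x lam_ker.
have [-> | c1_neq0] := eqVneq c1 0%R; last first.
  regroup HU (1 : gT) (x 1 c1) (x 2 c2 * x 3 c3 * x 4 c4 * x 5 c5 * x 6 c6 * x 7 c7 * x 8 c8
    * x 9 c9 * x 10 c10 * x 11 c11 * x 12 c12).
  separate HU moved 3 (- c1)%R.
by nf_memV HU.
Qed.

Lemma nf_separated6 (lam : 'CF(Vgroup x 6)) s :
  (s != 0)%R -> root_lift phi lam s -> nf_separated lam.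
Proof.
move=> s_neq0 [lam_lin lam_x lam_ker] c1 c2 c3 c4 c5 c6 c7 c8 c9 c10 c11 c12.
have moved := moved_by_root_conj1 HU phi_a0 (isT : (1 <= 6 <= 12)%N) s_neq0 lam_lin lam_x lam_ker.
have [-> | c2_neq0] := eqVneq c2 0%R; last first.
  regroup HU (x 1 c1) (x 2 c2) (x 3 c3 * x 4 c4 * x 5 c5 * x 6 c6 * x 7 c7 * x 8 c8
    * x 9 c9 * x 10 c10 * x 11 c11 * x 12 c12).
  separate HU moved 3 (- c2)%R.
by nf_memV HU.
Qed.

Lemma nf_separated7 (lam : 'CF(Vgroup x 7)) s :
  (s != 0)%R -> root_lift phi lam s -> nf_separated lam.
Proof.
move=> s_neq0 [lam_lin lam_x lam_ker] c1 c2 c3 c4 c5 c6 c7 c8 c9 c10 c11 c12.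
have moved := moved_by_root_conj1 HU phi_a0 (isT : (1 <= 7 <= 12)%N) s_neq0 lam_lin lam_x lam_ker.
have [-> | c4_neq0] := eqVneq c4 0%R; last first.
  regroup HU (x 1 c1 * x 2 c2 * x 3 c3) (x 4 c4) (x 5 c5 * x 6 c6 * x 7 c7 * x 8 c8
    * x 9 c9 * x 10 c10 * x 11 c11 * x 12 c12).
  separate HU moved 3 c4.
by nf_memV HU.
Qed.

Lemma nf_separated8 (lam : 'CF(Vgroup x 8)) s :
  (s != 0)%R -> root_lift phi lam s -> nf_separated lam.
Proof.
move=> s_neq0 [lam_lin lam_x lam_ker] c1 c2 c3 c4 c5 c6 c7 c8 c9 c10 c11 c12.
have moved := moved_by_root_conj1 HU phi_a0 (isT : (1 <= 8 <= 12)%N) s_neq0 lam_lin lam_x lam_ker.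
have [-> | c1_neq0] := eqVneq c1 0%R; last first.
  regroup HU (1 : gT) (x 1 c1 * x 2 c2) (x 3 c3 * x 4 c4 * x 5 c5 * x 6 c6 * x 7 c7 * x 8 c8
    * x 9 c9 * x 10 c10 * x 11 c11 * x 12 c12).
  separate HU moved 6 c1.
have [-> | c2_neq0] := eqVneq c2 0%R; last first.
  regroup HU (1 : gT) (x 2 c2) (x 3 c3 * x 4 c4 * x 5 c5 * x 6 c6 * x 7 c7 * x 8 c8
    * x 9 c9 * x 10 c10 * x 11 c11 * x 12 c12).
  separate HU moved 5 c2.
by nf_memV HU.
Qed.

Lemma nf_separated9 (lam : 'CF(Vgroup x 9)) s :
  (s != 0)%R -> root_lift phi lam s -> nf_separated lam.
Proof.
move=> s_neq0 [lam_lin lam_x lam_ker] c1 c2 c3 c4 c5 c6 c7 c8 c9 c10 c11 c12.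
have moved := moved_by_root_conj1 HU phi_a0 (isT : (1 <= 9 <= 12)%N) s_neq0 lam_lin lam_x lam_ker.
have [-> | c1_neq0] := eqVneq c1 0%R; last first.
  have x12 : commute (x 1 c1) (x 2 c2) by apply/commgP/eqP; rewrite (comm_root HU).
  rewrite (_ : nf _ _ _ _ _ _ _ _ _ _ _ _ _ = x 2 c2 * (x 1 c1 * x 3 c3 * x 4 c4) * (x 5 c5
    * x 6 c6 * x 7 c7 * x 8 c8 * x 9 c9 * x 10 c10 * x 11 c11 * x 12 c12)); last first.
    by rewrite /nf mulgA x12 !mulgA.
  separate HU moved 7 (- c1)%R.
have [-> | c4_neq0] := eqVneq c4 0%R; last first.
  regroup HU (x 2 c2 * x 3 c3) (x 4 c4) (x 5 c5 * x 6 c6 * x 7 c7 * x 8 c8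
    * x 9 c9 * x 10 c10 * x 11 c11 * x 12 c12).
  separate HU moved 5 c4.
by nf_memV HU.
Qed.

Lemma nf_separated10 (lam : 'CF(Vgroup x 10)) s :
  (s != 0)%R -> root_lift phi lam s -> nf_separated lam.
Proof.
move=> s_neq0 [lam_lin lam_x lam_ker] c1 c2 c3 c4 c5 c6 c7 c8 c9 c10 c11 c12.
have moved := moved_by_root_conj1 HU phi_a0 (isT : (1 <= 10 <= 12)%N) s_neq0 lam_lin lam_x lam_ker.
have [-> | c2_neq0] := eqVneq c2 0%R; last first.
  regroup HU (x 1 c1) (x 2 c2 * x 3 c3 * x 4 c4) (x 5 c5 * x 6 c6 * x 7 c7 * x 8 c8
    * x 9 c9 * x 10 c10 * x 11 c11 * x 12 c12).
  separate HU moved 7 (- c2)%R.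
have [-> | c4_neq0] := eqVneq c4 0%R; last first.
  regroup HU (x 1 c1 * x 3 c3) (x 4 c4) (x 5 c5 * x 6 c6 * x 7 c7 * x 8 c8
    * x 9 c9 * x 10 c10 * x 11 c11 * x 12 c12).
  separate HU moved 6 c4.
by nf_memV HU.
Qed.

Lemma nf_separated11 (lam : 'CF(Vgroup x 11)) s :
  (s != 0)%R -> root_lift phi lam s -> nf_separated lam.
Proof.
move=> s_neq0 [lam_lin lam_x lam_ker] c1 c2 c3 c4 c5 c6 c7 c8 c9 c10 c11 c12.
have Ha : (1 <= 11 <= 12)%N by [].
have moved := moved_by_root_conj HU phi_a0 Ha s_neq0 lam_lin lam_x lam_ker.
have moved1 := moved_by_root_conj1 HU phi_a0 Ha s_neq0 lam_lin lam_x lam_ker.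
have [-> | c1_neq0] := eqVneq c1 0%R; last first.
  regroup HU (1 : gT) (x 1 c1 * x 2 c2 * x 3 c3 * x 4 c4) (x 5 c5 * x 6 c6 * x 7 c7 * x 8 c8
    * x 9 c9 * x 10 c10 * x 11 c11 * x 12 c12).
  right; apply: (moved _ _ _ 10 c1 (fun t => x 12 (c3 * (c1 * t))%R)); separate_goals HU.
have [-> | c2_neq0] := eqVneq c2 0%R; last first.
  regroup HU (1 : gT) (x 2 c2 * x 3 c3 * x 4 c4) (x 5 c5 * x 6 c6 * x 7 c7 * x 8 c8
    * x 9 c9 * x 10 c10 * x 11 c11 * x 12 c12).
  right; apply: (moved _ _ _ 9 c2 (fun t => x 12 (c3 * (c2 * t))%R)); separate_goals HU.
have [-> | c4_neq0] := eqVneq c4 0%R; last first.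
  regroup HU (x 3 c3) (x 4 c4) (x 5 c5 * x 6 c6 * x 7 c7 * x 8 c8
    * x 9 c9 * x 10 c10 * x 11 c11 * x 12 c12).
  separate HU moved1 8 c4.
by nf_memV HU.
Qed.


Lemma nf_separated12 (lam : 'CF(Vgroup x 12)) s :
  (s != 0)%R -> root_lift phi lam s -> nf_separated lam.
Proof.
move=> s_neq0 [lam_lin lam_x lam_ker] c1 c2 c3 c4 c5 c6 c7 c8 c9 c10 c11 c12.
have moved := moved_by_root_conj1 HU phi_a0 (isT : (1 <= 12 <= 12)%N) s_neq0 lam_lin lam_x lam_ker.
have [-> | c3_neq0] := eqVneq c3 0%R; last first.
  regroup HU (x 1 c1 * x 2 c2) (x 3 c3 * x 4 c4 * x 5 c5 * x 6 c6 * x 7 c7)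
    (x 8 c8 * x 9 c9 * x 10 c10 * x 11 c11 * x 12 c12).
  separate HU moved 11 c3.
have [-> | c5_neq0] := eqVneq c5 0%R; last first.
  regroup HU (x 1 c1 * x 2 c2 * x 4 c4) (x 5 c5 * x 6 c6 * x 7 c7)
    (x 8 c8 * x 9 c9 * x 10 c10 * x 11 c11 * x 12 c12).
  separate HU moved 10 c5.
have [-> | c6_neq0] := eqVneq c6 0%R; last first.
  regroup HU (x 1 c1 * x 2 c2 * x 4 c4) (x 6 c6 * x 7 c7)
    (x 8 c8 * x 9 c9 * x 10 c10 * x 11 c11 * x 12 c12).
  separate HU moved 9 c6.
have [-> | c7_neq0] := eqVneq c7 0%R; last first.
  regroup HU (x 1 c1 * x 2 c2 * x 4 c4) (x 7 c7)
    (x 8 c8 * x 9 c9 * x 10 c10 * x 11 c11 * x 12 c12).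
  separate HU moved 8 (- c7)%R.
by nf_memV HU.
Qed.

Lemma cfInd_root_irr a (lam : 'CF(Vgroup x a)) s :
  a \in posroots -> (s != 0)%R -> root_lift phi lam s -> ('Ind[U] lam \in irr U)%R.
Proof.
move=> a_root s_neq0 lamP.
have sep : nf_separated lam.
  rewrite mem_posroots in a_root.
  case: a a_root lam lamP => [|[|[|[|[|[|[|[|[|[|[|[|[|a]]]]]]]]]]]]] // _ lam lamP.
  1-4: by apply: nf_separated_leg_nil; rewrite leg_rootE.
  - exact: nf_separated5 s_neq0 lamP.
  - exact: nf_separated6 s_neq0 lamP.
  - exact: nf_separated7 s_neq0 lamP.
  - exact: nf_separated8 s_neq0 lamP.
  - exact: nf_separated9 s_neq0 lamP.
  - exact: nf_separated10 s_neq0 lamP.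
  - exact: nf_separated11 s_neq0 lamP.
  - exact: nf_separated12 s_neq0 lamP.
have [lam_lin _ _] := lamP.
apply: cfInd_lin_char_irr => [|//|y /(U_prodx HU)[d ->]]; first exact: Vgroup_sub.
by rewrite /prodx !big_ord_recl big_ord0 mulg1; apply: sep.
Qed.

End RootSeparation.

Theorem proposition3p3 (F : finFieldType) (gT : finGroupType)
  (U : {group gT}) (x : nat -> F -> gT) (phi : F -> algC) :
  is_D4_unipotent U x ->
  (forall a b : F, phi (a + b) = phi a * phi b) ->
  (exists a : F, phi a != 1) ->
  forall a : nat, a \in posroots ->
  forall lam : F -> 'CF(Vgroup x a),
  (forall s : F, s != 0 ->
     [/\ lam s \is a linear_char,
         forall d : F, lam s (x a d) = phi (s * d) &
         forall g : nat, g \in posroots -> (ht a < ht g)%N ->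
           Xset x g \subset cfker (lam s)]) ->
  [/\ forall s : F, s != 0 -> 'Ind[U] (lam s) \in irr U,
      {in [pred s : F | s != 0] &, injective (fun s => 'Ind[U] (lam s))} &
      forall s : F, s != 0 -> forall d : F,
        'Ind[U] (lam s) (x a d) = 'Ind[U] (lam s) 1%g * phi (s * d)].
Proof.
move=> HU phiD [a0 phi_a0] a a_root lam lamP.
have Ha : (1 <= a <= 12)%N by rewrite -mem_posroots.
have phi0 : phi 0 = 1.
  have [lam_lin lam_x _] := lamP 1 (oner_neq0 _).
  by rewrite -(mulr0 1) -lam_x (root_elem0 HU) // lin_char1.
have value s : s != 0 -> forall d, 'Ind[U] (lam s) (x a d) = 'Ind[U] (lam s) 1%g * phi (s * d).
  by move=> /lamP[lam_lin lam_x lam_ker] d; exact: (cfInd_root_value HU Ha lam_lin lam_x lam_ker).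
split=> // [s s_neq0 | s t]; first exact: (cfInd_root_irr HU phi_a0 a_root s_neq0 (lamP s s_neq0)).
rewrite !inE => s_neq0 t_neq0 Ind_st; apply: (add_char_scale_inj phiD phi0 phi_a0) => d.
have [lam_lin _ _] := lamP t t_neq0.
have Ind1_neq0 : 'Ind[U] (lam t) 1%g != 0.
  by rewrite cfInd1 ?(Vgroup_sub HU) // lin_char1 // mulr1 pnatr_eq0 -lt0n indexg_gt0.
by apply: (mulfI Ind1_neq0); rewrite -[in LHS]Ind_st -!value // Ind_st.
Qed.
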